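(* Let $G$ be a non-abelian subgroup of $\mathcal{H}(n,\mathbb{C})$ with $\Lambda_G\not\subset\mathbb{R}$ and $G\subset\mathcal{SR}_n$. Then $G$ has a dense orbit in $\mathbb{C}^n$ if and only if $\overline{G_1(0)}=\mathbb{C}^n$.
   Context: $\mathcal{H}(n,\mathbb{C})$ is the group of all maps $z\mapsto\lambda z+b$ of $\mathbb{C}^n$ with $\lambda\in\mathbb{C}^*$, $b\in\mathbb{C}^n$ ($\lambda$ = ratio); $\mathcal{T}_n$ = subgroup of translations. $H_2=(\frac{\pi}{2}+\pi\mathbb{Z})\cup\pi\mathbb{Z}$, $F_2=\{e^{ix}:x\in H_2\}$, $H_3=(\frac{\pi}{3}+\pi\mathbb{Z})\cup(-\frac{\pi}{3}+\pi\mathbb{Z})\cup\pi\mathbb{Z}$, $F_3=\{e^{ix}:x\in H_3\}$; $\mathcal{S}_i\mathcal{R}_n=\{z\mapsto\lambda z+b:\lambda\in F_i, b\in\mathbb{C}^n\}$, $\mathcal{SR}_n=\mathcal{S}_2\mathcal{R}_n\cup\mathcal{S}_3\mathcal{R}_n$. For a subgroup $G$: $\Lambda_G$ is the set of ratios of elements of $G$; $G_1=G\cap\mathcal{T}_n$ and $G_1(0)=\{f(0):f\in G_1\}$. *)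

From Stdlib Require Import Reals ZArith.
From Stdlib Require Vectors.Fin.
Open Scope R_scope.

Definition C := (R * R)%type.
Definition Cre (z : C) : R := fst z.
Definition Cim (z : C) : R := snd z.
Definition C0 : C := (0, 0).
Definition C1 : C := (1, 0).
Definition Cadd (z w : C) : C := (fst z + fst w, snd z + snd w).
Definition Csub (z w : C) : C := (fst z - fst w, snd z - snd w).
Definition Cmul (z w : C) : C :=
  (fst z * fst w - snd z * snd w, fst z * snd w + snd z * fst w).
Definition Cmod (z : C) : R := sqrt (fst z * fst z + snd z * snd z).
Definition Cexpi (x : R) : C := (cos x, sin x).

Definition Cn (n : nat) := Fin.t n -> C.
Definition zeroCn (n : nat) : Cn n := fun _ => C0.

Definition affmap (n : nat) (lam : C) (b : Cn n) : Cn n -> Cn n :=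
  fun z i => Cadd (Cmul lam (z i)) (b i).

Definition in_H (n : nat) (f : Cn n -> Cn n) : Prop :=
  exists lam b, lam <> C0 /\ f = affmap n lam b.

Definition is_subgroup_H (n : nat) (G : (Cn n -> Cn n) -> Prop) : Prop :=
  (forall f, G f -> in_H n f) /\
  G (fun z => z) /\
  (forall f g, G f -> G g -> G (fun z => f (g z))) /\
  (forall f, G f -> exists g, G g /\ (fun z => f (g z)) = (fun z => z)
                               /\ (fun z => g (f z)) = (fun z => z)).

Definition non_abelian (n : nat) (G : (Cn n -> Cn n) -> Prop) : Prop :=
  exists f g, G f /\ G g /\ (fun z => f (g z)) <> (fun z => g (f z)).

Definition ratios (n : nat) (G : (Cn n -> Cn n) -> Prop) (lam : C) : Prop :=
  exists f b, G f /\ lam <> C0 /\ f = affmap n lam b.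

Definition ratios_not_real (n : nat) (G : (Cn n -> Cn n) -> Prop) : Prop :=
  exists lam, ratios n G lam /\ Cim lam <> 0.

Definition H2 (x : R) : Prop :=
  (exists k : Z, x = PI / 2 + PI * IZR k) \/ (exists k : Z, x = PI * IZR k).
Definition F2 (lam : C) : Prop := exists x, H2 x /\ lam = Cexpi x.
Definition H3 (x : R) : Prop :=
  (exists k : Z, x = PI / 3 + PI * IZR k) \/
  (exists k : Z, x = - (PI / 3) + PI * IZR k) \/
  (exists k : Z, x = PI * IZR k).
Definition F3 (lam : C) : Prop := exists x, H3 x /\ lam = Cexpi x.

Definition S2R (n : nat) (f : Cn n -> Cn n) : Prop :=
  exists lam b, F2 lam /\ f = affmap n lam b.
Definition S3R (n : nat) (f : Cn n -> Cn n) : Prop :=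
  exists lam b, F3 lam /\ f = affmap n lam b.
Definition SR (n : nat) (f : Cn n -> Cn n) : Prop := S2R n f \/ S3R n f.

Definition is_translation (n : nat) (f : Cn n -> Cn n) : Prop :=
  exists b, f = affmap n C1 b.
Definition G1_at0 (n : nat) (G : (Cn n -> Cn n) -> Prop) (w : Cn n) : Prop :=
  exists f, G f /\ is_translation n f /\ w = f (zeroCn n).

(* density in C^n (standard topology, via the product/max metric) *)
Definition dense_in_Cn (n : nat) (S : Cn n -> Prop) : Prop :=
  forall (z : Cn n) (eps : R), 0 < eps ->
    exists w, S w /\ forall i : Fin.t n, Cmod (Csub (w i) (z i)) < eps.

Definition orbit (n : nat) (G : (Cn n -> Cn n) -> Prop) (z : Cn n) (w : Cn n) : Prop :=
  exists f, G f /\ w = f z.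

Definition has_dense_orbit (n : nat) (G : (Cn n -> Cn n) -> Prop) : Prop :=
  exists z, dense_in_Cn n (orbit n G z).

(* Ratios of maps in SR_n are twelfth roots of unity. If the orbit of z is dense, approximate
   the 13 points (k / 12!) x, k = 0..12, by g_k(z) with g_k in G. Two of them, g_a and g_b
   (a < b), share their ratio, so g_b g_a^-1 is a translation in G_1 by
   g_b(z) - g_a(z) ~ ((b - a) / 12!) x, and its (12! / (b - a))-th power is a translation in G_1
   close to x. Conversely G_1(0) lies in the orbit of 0. *)

From Pilot Require Import Defs.
From Stdlib Require Import Reals ZArith Lia Lra List Permutation FunctionalExtensionality.
From Coquelicot Require Complex.
Open Scope R_scope.

Lemma Cmod_Complex (z : Defs.C) : Cmod z = Complex.Cmod z.
Proof. unfold Cmod, Complex.Cmod. f_equal. ring. Qed.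

Lemma Cmod_sub_le (p q : Defs.C) : Cmod (Csub p q) <= Cmod p + Cmod q.
Proof.
  rewrite !Cmod_Complex, <- (Complex.Cmod_opp q).
  exact (Complex.Cmod_triangle p (Complex.Copp q)).
Qed.

Lemma Cmod_scale (t : R) (z : Defs.C) : 0 <= t -> Cmod (Cmul (t, 0) z) = t * Cmod z.
Proof.
  intros Ht. rewrite !Cmod_Complex.
  change (Complex.Cmod (Complex.Cmult (Complex.RtoC t) z) = t * Complex.Cmod z).
  rewrite Complex.Cmod_mult, Complex.Cmod_R, Rabs_pos_eq by exact Ht.
  reflexivity.
Qed.

Lemma Cexpi_add_2PI_mul (x : R) (q : Z) : Cexpi (x + 2 * IZR q * PI) = Cexpi x.
Proof.
  unfold Cexpi. destruct q as [|p|p].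
  - f_equal; f_equal; ring.
  - rewrite <- (positive_nat_Z p), <- INR_IZR_INZ, cos_period, sin_period. reflexivity.
  - set (k := INR (Pos.to_nat p)).
    replace x with (x + 2 * IZR (Z.neg p) * PI + 2 * k * PI) at 3 4.
    + unfold k. rewrite cos_period, sin_period. reflexivity.
    + unfold k. rewrite INR_IZR_INZ, positive_nat_Z, <- Pos2Z.opp_pos, opp_IZR. ring.
Qed.

Definition root12 (r : nat) : Defs.C := Cexpi (PI / 6 * INR r).

Lemma Cexpi_sixth_root12 (m : Z) : exists r, (r < 12)%nat /\ Cexpi (PI / 6 * IZR m) = root12 r.
Proof.
  exists (Z.to_nat (m mod 12)). split.
  - pose proof (Z.mod_pos_bound m 12). lia.
  - unfold root12. rewrite INR_IZR_INZ, Z2Nat.id by (apply Z.mod_pos_bound; lia).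
    rewrite <- (Cexpi_add_2PI_mul (PI / 6 * IZR (m mod 12)) (m / 12)). f_equal.
    rewrite (Z_div_mod_eq_full m 12) at 1. rewrite plus_IZR, mult_IZR. field.
Qed.

Lemma F2_or_F3_sixth_angle (lam : Defs.C) :
  F2 lam \/ F3 lam -> exists m : Z, lam = Cexpi (PI / 6 * IZR m).
Proof.
  intros [[x [Hx ->]] | [x [Hx ->]]].
  - destruct Hx as [[k ->] | [k ->]].
    + exists (6 * k + 3)%Z. rewrite plus_IZR, mult_IZR. f_equal. field.
    + exists (6 * k)%Z. rewrite mult_IZR. f_equal. field.
  - destruct Hx as [[k ->] | [[k ->] | [k ->]]].
    + exists (6 * k + 2)%Z. rewrite plus_IZR, mult_IZR. f_equal. field.
    + exists (6 * k - 2)%Z. rewrite minus_IZR, mult_IZR. f_equal. field.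
    + exists (6 * k)%Z. rewrite mult_IZR. f_equal. field.
Qed.

Lemma SR_ratio_root12 (n : nat) (f : Cn n -> Cn n) :
  SR n f -> exists r b, (r < 12)%nat /\ f = affmap n (root12 r) b.
Proof.
  intros [[lam [b [Hlam ->]]] | [lam [b [Hlam ->]]]];
    [destruct (F2_or_F3_sixth_angle lam (or_introl Hlam)) as [m ->]
    |destruct (F2_or_F3_sixth_angle lam (or_intror Hlam)) as [m ->]];
    destruct (Cexpi_sixth_root12 m) as [r [Hr ->]]; eauto.
Qed.

Lemma pigeonhole_rel (P : nat -> nat -> Prop) (N : nat) :
  (forall k, (k <= N)%nat -> exists r, (r < N)%nat /\ P k r) ->
  exists a b r, (a < b <= N)%nat /\ P a r /\ P b r.
Proof.
  intros HP.
  destruct (@Permutation_pigeonhole_rel _ _ P (seq 0 (S N)) (seq 0 N))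
    as [a [b [l [Hperm [r [_ [Ha Hb]]]]]]].
  - apply Forall_forall. intros k Hk. apply in_seq in Hk.
    destruct (HP k) as [r [Hr Pr]]; [lia|].
    apply Exists_exists. exists r. split; [apply in_seq; lia | exact Pr].
  - rewrite !length_seq. lia.
  - assert (Hnodup : NoDup (a :: b :: l))
      by exact (Permutation_NoDup Hperm (seq_NoDup _ _)).
    assert (Hab : a <> b).
    { intros <-. inversion Hnodup as [|? ? Hnotin]. apply Hnotin. now left. }
    assert (Hin : forall k, In k (a :: b :: l) -> (k <= N)%nat).
    { intros k Hk. apply (Permutation_in k (Permutation_sym Hperm)), in_seq in Hk. lia. }
    pose proof (Hin a (or_introl eq_refl)). pose proof (Hin b (or_intror (or_introl eq_refl))).
    destruct (Nat.lt_gt_cases a b) as [[Hlt | Hgt] _]; [exact Hab| |].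
    + exists a, b, r. auto.
    + exists b, a, r. auto.
Qed.

Lemma divide_fact (N d : nat) : (1 <= d <= N)%nat -> Nat.divide d (fact N).
Proof.
  induction N as [|N IH]; intros Hd; [lia|].
  destruct (Nat.eq_dec d (S N)) as [-> | Hne].
  - apply Nat.divide_factor_l.
  - apply Nat.divide_mul_r, IH. lia.
Qed.

Definition Cn_scale (n : nat) (t : R) (x : Cn n) : Cn n := fun i => Cmul (t, 0) (x i).

Definition Cn_close (n : nat) (eps : R) (u v : Cn n) : Prop :=
  forall i, Cmod (Csub (u i) (v i)) < eps.

Lemma affmap_zero (n : nat) (lam : Defs.C) (b : Cn n) : affmap n lam b (zeroCn n) = b.
Proof.
  extensionality i. unfold affmap, zeroCn, Cadd, Cmul, Defs.C0.
  apply injective_projections; simpl; ring.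
Qed.

Lemma affmap_C1_comp (n : nat) (u v : Cn n) :
  (fun z => affmap n Defs.C1 u (affmap n Defs.C1 v z))
  = affmap n Defs.C1 (fun i => Cadd (u i) (v i)).
Proof.
  extensionality z. extensionality i. unfold affmap, Cadd, Cmul, Defs.C1.
  apply injective_projections; simpl; ring.
Qed.

Lemma G1_at0_iff (n : nat) (G : (Cn n -> Cn n) -> Prop) (w : Cn n) :
  G1_at0 n G w <-> G (affmap n Defs.C1 w).
Proof.
  split.
  - intros [f [Gf [[b ->] ->]]]. rewrite affmap_zero. exact Gf.
  - intros Gw. exists (affmap n Defs.C1 w). repeat split.
    + exact Gw.
    + exists w. reflexivity.
    + symmetry. apply affmap_zero.
Qed.

Section Translations.
Variable n : nat.
Variable G : (Cn n -> Cn n) -> Prop.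
Hypothesis HG : is_subgroup_H n G.

Lemma G1_at0_zero : G1_at0 n G (zeroCn n).
Proof.
  apply G1_at0_iff.
  replace (affmap n Defs.C1 (zeroCn n)) with (fun z : Cn n => z); [apply HG|].
  extensionality z. extensionality i. unfold affmap, zeroCn, Cadd, Cmul, Defs.C1, Defs.C0.
  apply injective_projections; simpl; ring.
Qed.

Lemma G1_at0_add (u v : Cn n) :
  G1_at0 n G u -> G1_at0 n G v -> G1_at0 n G (fun i => Cadd (u i) (v i)).
Proof.
  rewrite !G1_at0_iff, <- affmap_C1_comp. apply HG.
Qed.

Lemma G1_at0_scale_nat (c : nat) (u : Cn n) :
  G1_at0 n G u -> G1_at0 n G (Cn_scale n (INR c) u).
Proof.
  intros Hu. induction c as [|c IH].
  - replace (Cn_scale n (INR 0) u) with (zeroCn n); [exact G1_at0_zero|].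
    extensionality i. unfold Cn_scale, zeroCn, Cmul, Defs.C0.
    apply injective_projections; simpl; ring.
  - replace (Cn_scale n (INR (S c)) u) with (fun i => Cadd (u i) (Cn_scale n (INR c) u i)).
    + exact (G1_at0_add _ _ Hu IH).
    + extensionality i. unfold Cn_scale, Cadd, Cmul. rewrite S_INR.
      apply injective_projections; simpl; ring.
Qed.

(* [f2 (f1^-1 w) = w + b2 - b1], since [f1] and [f2] share the linear part. *)
Lemma G1_at0_sub_same_ratio (f1 f2 : Cn n -> Cn n) (lam : Defs.C) (b1 b2 : Cn n) :
  G f1 -> G f2 -> f1 = affmap n lam b1 -> f2 = affmap n lam b2 ->
  G1_at0 n G (fun i => Csub (b2 i) (b1 i)).
Proof.
  intros G1 G2 -> ->. apply G1_at0_iff.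
  destruct HG as [_ [_ [Hcomp Hinv]]].
  destruct (Hinv _ G1) as [g [Gg [Hg _]]].
  replace (affmap n Defs.C1 (fun i => Csub (b2 i) (b1 i)))
    with (fun z => affmap n lam b2 (g z)); [exact (Hcomp _ _ G2 Gg)|].
  extensionality w. extensionality i.
  pose proof (f_equal (fun F => F w i) Hg) as Hw. simpl in Hw.
  unfold affmap, Cadd, Cmul, Csub, Defs.C1 in *.
  apply injective_projections; simpl;
    [apply (f_equal fst) in Hw | apply (f_equal snd) in Hw]; simpl in Hw; lra.
Qed.

End Translations.

Lemma close_translation_multiple (n : nat) (lam : Defs.C) (ba bb z x : Cn n)
    (sa sb t del : R) :
  0 < t -> t * (sb - sa) = 1 ->
  Cn_close n del (affmap n lam ba z) (Cn_scale n sa x) ->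
  Cn_close n del (affmap n lam bb z) (Cn_scale n sb x) ->
  Cn_close n (2 * t * del) (Cn_scale n t (fun i => Csub (bb i) (ba i))) x.
Proof.
  intros Ht Hts Ha Hb i. specialize (Ha i). specialize (Hb i).
  set (da := Csub (affmap n lam ba z i) (Cn_scale n sa x i)) in Ha.
  set (db := Csub (affmap n lam bb z i) (Cn_scale n sb x i)) in Hb.
  assert (Hid : Csub (Cn_scale n t (fun i => Csub (bb i) (ba i)) i) (x i)
                = Cmul (t, 0) (Csub db da)).
  { assert (Hunit : forall y, t * (sb * y) - t * (sa * y) = y).
    { intros y. rewrite <- (Rmult_1_l y) at 3. rewrite <- Hts. ring. }
    pose proof (Hunit (fst (x i))). pose proof (Hunit (snd (x i))).
    unfold da, db, Cn_scale, affmap, Csub, Cadd, Cmul.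
    apply injective_projections; simpl; lra. }
  rewrite Hid, Cmod_scale by lra.
  pose proof (Cmod_sub_le db da). nra.
Qed.

Lemma dense_orbit_dense_translations (n N : nat) (G : (Cn n -> Cn n) -> Prop)
    (ratio : nat -> Defs.C) :
  is_subgroup_H n G ->
  (forall f, G f -> exists r b, (r < N)%nat /\ f = affmap n (ratio r) b) ->
  has_dense_orbit n G -> dense_in_Cn n (G1_at0 n G).
Proof.
  intros HG Hratio [z Hz] x eps Heps.
  set (M := INR (fact N)).
  assert (HM : 0 < M) by apply lt_0_INR, lt_O_fact.
  set (del := eps / (2 * M)).
  assert (Hdel : 0 < del) by (apply Rdiv_lt_0_compat; lra).
  destruct (pigeonhole_rel (fun k r => exists f b, G f /\ f = affmap n (ratio r) b /\
              Cn_close n del (f z) (Cn_scale n (INR k / M) x)) N)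
    as [a [b [r [Hab [[fa [ba [Ga [Ea Ha]]]] [fb [bb [Gb [Eb Hb]]]]]]]]].
  { intros k _. destruct (Hz (Cn_scale n (INR k / M) x) del Hdel) as [w [[f [Gf ->]] Hw]].
    destruct (Hratio f Gf) as [r [b [Hr Hf]]]. eauto 7. }
  destruct (divide_fact N (b - a)) as [c Hc]; [lia|].
  assert (HMc : M = INR c * (INR b - INR a)).
  { unfold M. rewrite Hc, mult_INR, minus_INR by lia. reflexivity. }
  assert (Hba : 1 <= INR b - INR a) by (rewrite <- minus_INR by lia; apply (le_INR 1); lia).
  assert (Hc0 : 0 < INR c) by nra.
  assert (HcM : INR c <= M) by nra.
  exists (Cn_scale n (INR c) (fun i => Csub (bb i) (ba i))). split.
  - apply G1_at0_scale_nat; [exact HG|].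
    exact (G1_at0_sub_same_ratio n G HG fa fb (ratio r) ba bb Ga Gb Ea Eb).
  - subst fa fb. intros i.
    apply Rlt_le_trans with (2 * INR c * del).
    + apply (close_translation_multiple n (ratio r) ba bb z x (INR a / M) (INR b / M));
        [exact Hc0 | rewrite HMc; field; nra | exact Ha | exact Hb].
    + replace eps with (2 * M * del) by (unfold del; field; lra). nra.
Qed.

Theorem corollary1p2 (n : nat) (G : (Cn n -> Cn n) -> Prop) :
  is_subgroup_H n G ->
  non_abelian n G ->
  ratios_not_real n G ->
  (forall f, G f -> SR n f) ->
  (has_dense_orbit n G <-> dense_in_Cn n (G1_at0 n G)).
Proof.
  intros HG _ _ HSR. split.
  - apply (dense_orbit_dense_translations n 12 G root12 HG).
    intros f Gf. exact (SR_ratio_root12 n f (HSR f Gf)).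
  - intros Hdense. exists (zeroCn n). intros x eps Heps.
    destruct (Hdense x eps Heps) as [w [[f [Gf [_ ->]]] Hw]].
    exists (f (zeroCn n)). split; [exists f; auto | exact Hw].
Qed.
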